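(* Let $A\subset\mathbb{R}^n$ with $0\in\overline{A}$, and let $\phi:(\mathbb{R}^n,0)\to(\mathbb{R}^n,0)$ be a bi-Lipschitz homeomorphism with constants $0<K_1\le K_2$, i.e. $K_1|x_1-x_2|\le|\phi(x_1)-\phi(x_2)|\le K_2|x_1-x_2|$ near $0$. Then for $d>0$ and $K>0$, $$ST_d\Big(\phi(A);\frac{KK_1}{K_2^d}\Big)\subset\phi(ST_d(A;K))\subset ST_d\Big(\phi(A);\frac{KK_2}{K_1^d}\Big)$$ in a small neighbourhood of $0\in\mathbb{R}^n$.
   Context: Sea-tangle neighbourhood of degree $d>0$ and width $C>0$: $ST_d(X;C)=\{x\in\mathbb{R}^n : \mathrm{dist}(x,X)\le C|x|^d\}$. *)

From HB Require Import structures.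
From mathcomp Require Import all_boot all_order all_algebra.
From mathcomp Require Import all_classical all_reals all_analysis.
Set Implicit Arguments. Unset Strict Implicit. Unset Printing Implicit Defensive.
Import Order.TTheory GRing.Theory Num.Theory.
Import numFieldNormedType.Exports.
Local Open Scope classical_set_scope.
Local Open Scope ring_scope.

Definition enorm (R : realType) (n : nat) (x : 'rV[R]_n) : R :=
  Num.sqrt (\sum_(i < n) x ord0 i ^+ 2).

Definition edist (R : realType) (n : nat) (x : 'rV[R]_n) (X : set 'rV[R]_n) : R :=
  inf [set enorm (x - y) | y in X].

Definition ST (R : realType) (n : nat) (d : R) (X : set 'rV[R]_n) (C : R)
  : set 'rV[R]_n :=
  [set x | edist x X <= C * (enorm x) `^ d].

From Pilot Require Import Defs.
From HB Require Import structures.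
From mathcomp Require Import all_boot all_order all_algebra.
From mathcomp Require Import all_classical all_reals all_analysis.
From mathcomp Require Import ring lra.
Import Order.TTheory GRing.Theory Num.Theory.
Import numFieldNormedType.Exports.
Local Open Scope classical_set_scope.
Local Open Scope ring_scope.

(* Near 0, phi and its inverse psi are Lipschitz with constants K2 and 1/K1,
   and K1 |z| <= |phi z| <= K2 |z|.  If dist(z, A) <= K |z|^d, pushing an
   almost nearest point of A through phi gives
   dist(phi z, phi A) <= K2 K |z|^d <= (K K2 / K1^d) |phi z|^d; symmetrically,
   pulling back through psi gives the other inclusion.  The only care needed
   is that these almost nearest points stay in the ball where the Lipschitz
   bounds hold: they lie within C |z|^d + delta of a point z close to 0. *)

Section EuclideanNorm.
Context {R : realType} {n : nat}.
Implicit Types (x : 'rV[R]_n) (P : 'rV[R]_n -> Prop).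

Lemma enorm_ge0 x : 0 <= enorm x.
Proof. exact: sqrtr_ge0. Qed.

Lemma enorm0 : enorm (0 : 'rV[R]_n) = 0.
Proof. by rewrite /enorm big1 ?sqrtr0 // => i _; rewrite mxE expr0n. Qed.

Lemma coord_le_enorm x j : `|x ord0 j| <= enorm x.
Proof.
rewrite /enorm -sqrtr_sqr ler_sqrt ?sumr_ge0 // => [|i _]; last exact: sqr_ge0.
by rewrite (bigD1 j) //= ler_wpDr // sumr_ge0 // => i _; exact: sqr_ge0.
Qed.

(* [`|x|] is the sup norm of the matrix normed module: it is the norm that
   gives [\near] its meaning on ['rV[R]_n]. *)
Lemma normr_le_enorm x : `|x| <= enorm x.
Proof.
rewrite [leLHS]/Num.Def.normr /= mx_normrE.
apply: bigmax_le => [|[i j] _]; first exact: enorm_ge0.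
by rewrite /= (ord1 i); exact: coord_le_enorm.
Qed.

Lemma enorm_le_normr x : enorm x <= Num.sqrt n%:R * `|x|.
Proof.
rewrite -[`|x|]normr_id -sqrtr_sqr /enorm -sqrtrM ?ler0n // ler_sqrt; last first.
  by rewrite mulr_ge0 ?ler0n ?sqr_ge0.
apply: le_trans (_ : _ <= \sum_(i < n) `|x| ^+ 2) _; last first.
  by rewrite sumr_const card_ord mulr_natl.
apply: ler_sum => i _; rewrite -real_normK ?num_real // lerXn2r ?nnegrE //.
rewrite [leRHS]/Num.Def.normr /= mx_normrE.
exact: (le_bigmax _ _ (ord0, i)).
Qed.

Lemma near0_enorm_lt {r} : 0 < r -> \forall x \near (0 : 'rV[R]_n), enorm x < r.
Proof.
move=> r_gt0; apply/nbhs_norm0P; exists (r / (Num.sqrt n%:R + 1)) => /=.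
  by rewrite divr_gt0 // ltr_wpDl ?sqrtr_ge0.
move=> x /=; rewrite ltr_pdivlMr ?ltr_wpDl ?sqrtr_ge0 // => xr.
apply: le_lt_trans (enorm_le_normr x) _; apply: le_lt_trans xr.
by rewrite mulrC ler_wpM2l // lerDl.
Qed.

Lemma near0_enorm_powR_lt {d e} : 0 < d -> 0 < e ->
  \forall x \near (0 : 'rV[R]_n), enorm x `^ d < e.
Proof.
move=> d_gt0 e_gt0; near=> x.
have -> : e = (e `^ d^-1) `^ d by rewrite -powRrM mulVf ?gt_eqF ?powRr1 ?(ltW e_gt0).
apply: gt0_ltr_powR; rewrite ?nnegrE ?enorm_ge0 ?powR_ge0 //.
by near: x; apply: near0_enorm_lt; rewrite powR_gt0.
Unshelve. all: by end_near. Qed.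

Lemma near0_enorm_ball {P} : (\forall x \near (0 : 'rV[R]_n), P x) ->
  exists2 r, 0 < r & forall x, enorm x < r -> P x.
Proof.
move=> /nbhs_norm0P[r r_gt0 Pr]; exists r => // x xr.
by apply: Pr; exact: le_lt_trans (normr_le_enorm x) xr.
Qed.

Lemma near0_powR_perturb {P C d} : 0 < C -> 0 < d ->
  (\forall a \near (0 : 'rV[R]_n), P a) ->
  exists2 delta, 0 < delta & \forall z \near (0 : 'rV[R]_n),
    forall a, enorm (z - a) < C * enorm z `^ d + delta -> P a.
Proof.
move=> C_gt0 d_gt0 /nbhs_norm0P[e e_gt0 Pe].
have e3_gt0 : 0 < e / 3 by rewrite divr_gt0.
exists (e / 3) => //; near=> z => a za; apply: Pe => /=.
have zsmall : enorm z < e / 3 by near: z; exact: near0_enorm_lt.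
have zpow : C * enorm z `^ d < e / 3.
  rewrite mulrC -ltr_pdivlMr //; near: z.
  by apply: near0_enorm_powR_lt; rewrite ?divr_gt0.
have := ler_normB z (z - a); rewrite subKr.
have := normr_le_enorm z; have := normr_le_enorm (z - a); lra.
Unshelve. all: by end_near. Qed.

End EuclideanNorm.

Section Distance.
Context {R : realType} {n : nat}.
Implicit Types (x y : 'rV[R]_n) (X : set 'rV[R]_n).

Lemma edist_le_enorm {x X y} : X y -> Defs.edist x X <= enorm (x - y).
Proof.
move=> Xy; apply: ge_inf; last by exists y.
by exists 0 => _ [z _ <-]; exact: enorm_ge0.
Qed.

Lemma edist_lt_enorm {x X b} : X !=set0 -> Defs.edist x X < b ->
  exists2 y, X y & enorm (x - y) < b.
Proof.
move=> [y Xy] /inf_lt[|_ [z Xz <-] xzb]; last by exists z.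
by exists (enorm (x - y)), y.
Qed.

Lemma edist_image_le {f : 'rV[R]_n -> 'rV[R]_n} {X z B L delta} :
  X !=set0 -> 0 <= L -> 0 < delta -> Defs.edist z X <= B ->
  (forall a, X a -> enorm (z - a) < B + delta ->
     enorm (f z - f a) <= L * enorm (z - a)) ->
  Defs.edist (f z) (f @` X) <= L * B.
Proof.
move=> X_neq0 L_ge0 delta_gt0 zB f_lip; apply/ler_addgt0Pr => e e_gt0.
pose e' := Num.min delta (e / (L + 1)).
have e'_gt0 : 0 < e' by rewrite lt_min delta_gt0 divr_gt0 // ltr_wpDl.
have [a Xa za] := edist_lt_enorm X_neq0 (le_lt_trans zB (ltr_pwDr e'_gt0 (lexx B))).
have Le' : L * e' <= e.
  have : e' * (L + 1) <= e by rewrite -ler_pdivlMr ?ltr_wpDl // ge_min lexx orbT.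
  nra.
apply: le_trans (edist_le_enorm (imageP f Xa)) _.
apply: le_trans (f_lip a Xa _) _.
  by apply: lt_le_trans za _; rewrite lerD2l ge_min lexx.
by apply: le_trans (ler_wpM2l L_ge0 (ltW za)) _; rewrite mulrDr lerD2l.
Qed.

End Distance.

Section BiLipschitzTransport.
Context {R : realType} {n : nat} {phi psi : 'rV[R]_n -> 'rV[R]_n}.
Context {A : set 'rV[R]_n} {K1 K2 r d K : R}.
Hypotheses (phiK : cancel phi psi) (psiK : cancel psi phi).
Hypotheses (psi_cont : continuous psi) (phi0 : phi 0 = 0).
Hypotheses (K1_gt0 : 0 < K1) (K1_le_K2 : K1 <= K2) (r_gt0 : 0 < r).
Hypothesis lip : forall x1 x2 : 'rV[R]_n, enorm x1 < r -> enorm x2 < r ->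
  K1 * enorm (x1 - x2) <= enorm (phi x1 - phi x2) /\
  enorm (phi x1 - phi x2) <= K2 * enorm (x1 - x2).
Hypotheses (A_neq0 : A !=set0) (d_gt0 : 0 < d) (K_gt0 : 0 < K).

Let K2_gt0 : 0 < K2. Proof. exact: lt_le_trans K1_le_K2. Qed.
Let K1_ge0 : 0 <= K1 := ltW K1_gt0.
Let K2_ge0 : 0 <= K2 := ltW K2_gt0.
Let K_ge0 : 0 <= K := ltW K_gt0.

Lemma near0_comp_psi (P : 'rV[R]_n -> Prop) :
  (\forall z \near (0 : 'rV[R]_n), P z) -> \forall x \near (0 : 'rV[R]_n), P (psi x).
Proof.
have psi0 : psi 0 = 0 by rewrite -phi0 phiK.
by move=> P0; apply: (psi_cont 0); rewrite psi0.
Qed.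

Lemma near0_psi_lt : \forall x \near (0 : 'rV[R]_n), enorm (psi x) < r.
Proof. exact: near0_comp_psi (near0_enorm_lt r_gt0). Qed.

Lemma powR_enorm_phi_bounds {z} : enorm z < r ->
  K1 `^ d * enorm z `^ d <= enorm (phi z) `^ d /\
  enorm (phi z) `^ d <= K2 `^ d * enorm z `^ d.
Proof.
move=> zr; have := lip _ _ zr (_ : enorm 0 < r).
rewrite enorm0 phi0 !subr0 => -[] // lo up.
rewrite -!powRM ?enorm_ge0 //.
by split; apply: (ge0_ler_powR (ltW d_gt0)); rewrite ?nnegrE ?mulr_ge0 ?enorm_ge0.
Qed.

Lemma image_ST_sub_ST_image : \forall x \near (0 : 'rV[R]_n),
  (phi @` ST d A K) x -> ST d (phi @` A) (K * K2 / K1 `^ d) x.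
Proof.
have [delta delta_gt0 near_small] :=
  near0_powR_perturb (n := n) K_gt0 d_gt0 (near0_enorm_lt r_gt0).
near=> x => -[z STz xE]; have zE : z = psi x by rewrite -xE phiK.
subst z; rewrite /ST /= -xE.
have psix_small : enorm (psi x) < r by near: x; exact: near0_psi_lt.
have close_small : forall a,
    enorm (psi x - a) < K * enorm (psi x) `^ d + delta -> enorm a < r.
  by near: x; exact: near0_comp_psi near_small.
apply: le_trans (edist_image_le A_neq0 K2_ge0 delta_gt0 STz _) _.
  by move=> a _ xa; have [] := lip _ a psix_small (close_small a xa).
have [lo _] := powR_enorm_phi_bounds psix_small.
have K1d_gt0 : 0 < K1 `^ d by rewrite powR_gt0.
apply: le_trans (ler_wpM2l _ lo); last by rewrite divr_ge0 ?mulr_ge0 ?powR_ge0.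
by rewrite !mulrA mulfVK ?gt_eqF // [K2 * K]mulrC.
Unshelve. all: by end_near. Qed.

Lemma ST_image_sub_image_ST : \forall x \near (0 : 'rV[R]_n),
  ST d (phi @` A) (K * K1 / K2 `^ d) x -> (phi @` ST d A K) x.
Proof.
have C_gt0 : 0 < K * K1 / K2 `^ d by rewrite divr_gt0 ?mulr_gt0 ?powR_gt0.
have [delta delta_gt0 near_small] := near0_powR_perturb C_gt0 d_gt0 near0_psi_lt.
have phiA_neq0 : (phi @` A) !=set0 by case: A_neq0 => a Aa; exists (phi a), a.
near=> x => STx; exists (psi x); last exact: psiK.
have psix_small : enorm (psi x) < r by near: x; exact: near0_psi_lt.
have close_small : forall b,
    enorm (x - b) < K * K1 / K2 `^ d * enorm x `^ d + delta -> enorm (psi b) < r.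
  by near: x; exact: near_small.
have psi_phiA : psi @` (phi @` A) = A.
  by rewrite image_comp (_ : psi \o phi = id) ?image_id //; apply/funext.
rewrite /ST /= -psi_phiA.
have K1V_ge0 : 0 <= K1^-1 by rewrite invr_ge0.
apply: le_trans (edist_image_le phiA_neq0 K1V_ge0 delta_gt0 STx _) _.
  move=> b _ xb; rewrite ler_pdivlMl //.
  by have [] := lip _ _ psix_small (close_small b xb); rewrite !psiK.
have [_ up] := powR_enorm_phi_bounds psix_small; rewrite psiK in up.
have K2d_gt0 : 0 < K2 `^ d by rewrite powR_gt0.
rewrite (_ : K1^-1 * _ = K * (enorm x `^ d / K2 `^ d)); last first.
  by field; rewrite !gt_eqF.
by rewrite ler_wpM2l // ler_pdivrMr // mulrC.
Unshelve. all: by end_near. Qed.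

Lemma ST_image_sandwich : \forall x \near (0 : 'rV[R]_n),
  (ST d (phi @` A) (K * K1 / K2 `^ d) x -> (phi @` ST d A K) x) /\
  ((phi @` ST d A K) x -> ST d (phi @` A) (K * K2 / K1 `^ d) x).
Proof.
near=> x; split; near: x; [exact: ST_image_sub_image_ST | exact: image_ST_sub_ST_image].
Unshelve. all: by end_near. Qed.

End BiLipschitzTransport.

Theorem lemma4p4 (R : realType) (n : nat) (A : set 'rV[R]_n)
  (phi : 'rV[R]_n -> 'rV[R]_n) (K1 K2 d K : R) :
  closure A 0 ->
  (exists psi : 'rV[R]_n -> 'rV[R]_n,
     [/\ cancel phi psi, cancel psi phi, continuous phi & continuous psi]) ->
  phi 0 = 0 ->
  0 < K1 -> K1 <= K2 ->
  (exists2 r : R, 0 < r & forall x1 x2 : 'rV[R]_n,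
     enorm x1 < r -> enorm x2 < r ->
     K1 * enorm (x1 - x2) <= enorm (phi x1 - phi x2) /\
     enorm (phi x1 - phi x2) <= K2 * enorm (x1 - x2)) ->
  0 < d -> 0 < K ->
  exists2 r : R, 0 < r & forall x : 'rV[R]_n, enorm x < r ->
    (ST d (phi @` A) (K * K1 / K2 `^ d) x -> (phi @` ST d A K) x) /\
    ((phi @` ST d A K) x -> ST d (phi @` A) (K * K2 / K1 `^ d) x).
Proof.
move=> clA [psi [phiK psiK _ psi_cont]] phi0 K1_gt0 K1_le_K2 [r r_gt0 lip] d_gt0 K_gt0.
(* [closure A 0] only serves to make [A] nonempty, as [edist x set0] is the
   junk value [inf set0]. *)
have A_neq0 : A !=set0 by have [a [Aa _]] := clA setT filterT; exists a.
apply: near0_enorm_ball.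
exact: ST_image_sandwich phiK psiK psi_cont phi0 K1_gt0 K1_le_K2 r_gt0 lip
  A_neq0 d_gt0 K_gt0.
Qed.
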